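(* Let $(H,v)$ be a rooted graph. Then for any integers $k\ge 0$ and $g\ge 1$, \[ X_{P^k(K_g,\,H)}=(g-1)!\sum_{l=0}^{g-1}(1-l)\,e_l\,X_{H^{k+g-1-l}}. \]
   Context: All graphs are finite simple graphs. The chromatic symmetric function of a graph $G$ is $X_G=\sum_{\kappa}\prod_{v\in V(G)}x_{\kappa(v)}$, where $\kappa$ ranges over proper colorings $\kappa:V(G)\to\{1,2,\dots\}$. $e_l$ is the $l$-th elementary symmetric function, $e_0=1$. $K_g$ is the complete graph on $g$ vertices, rooted at any vertex. For rooted graphs $(G,u)$, $(H,v)$ and $k\ge 0$, $P^k(G,H)$ is obtained from the disjoint union of $G$ and $H$ by adding a path of length $k$ (with $k-1$ new internal vertices) joining $u$ and $v$ (for $k=0$, $u$ and $v$ are identified). The tailed graph $H^k$ is $P^k(H,K_1)$, i.e., $H$ with a pendant path of length $k$ attached at its root. *)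

From HB Require Import structures.
From mathcomp Require Import all_boot all_order all_algebra.
From mathcomp Require Import mpoly.
Set Implicit Arguments. Unset Strict Implicit. Unset Printing Implicit Defensive.
Import GRing.Theory.
Local Open Scope ring_scope.

Record simple_graph := SGraph {
  vtx : finType;
  adj : rel vtx;
  adj_sym : ssrbool.symmetric adj;
  adj_irr : irreflexive adj }.

Record rooted_graph := RGraph { rg :> simple_graph; root : vtx rg }.

Definition simplify (T : finType) (e : rel T) : rel T :=
  fun a b => (a != b) && (e a b || e b a).

Lemma simplify_sym (T : finType) (e : rel T) : ssrbool.symmetric (simplify e).
Proof. by move=> a b; rewrite /simplify eq_sym orbC. Qed.

Lemma simplify_irr (T : finType) (e : rel T) : irreflexive (simplify e).
Proof. by move=> a; rewrite /simplify eqxx. Qed.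

Definition mk_sgraph (T : finType) (e : rel T) : simple_graph :=
  SGraph (@simplify_sym T e) (@simplify_irr T e).

Definition complete_rgraph (g : nat) (hg : (0 < g)%N) : rooted_graph :=
  @RGraph (mk_sgraph (fun x y : 'I_g => x != y)) (Ordinal hg).

(* P^k(G,H): disjoint union of G and H, joined by a path of length k from
   the root u of G to the root v of H (for k = 0, u and v are identified).
   Vertices: G  +  internal/terminal path vertices w_1..w_k (w_i encoded by
   i-1 : 'I_k)  +  (H minus v).  The vertex v of H is represented by w_k if
   k >= 1 and by u if k = 0. *)
Section PathJoin.
Variables (G H : rooted_graph) (k : nat).

Definition pj_vtx : finType :=
  ((vtx G + 'I_k) + {x : vtx H | x != root H})%type.

Definition pj_v : pj_vtx :=
  match [pick i : 'I_k | i.+1 == k] with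
  | Some i => inl (inr i)
  | None => inl (inl (root G))
  end.

Definition pj_H (x : vtx H) : pj_vtx :=
  match insub x with
  | Some y => inr y
  | None => pj_v
  end.

Definition pj_base (a b : pj_vtx) : bool :=
  match a, b with
  | inl (inl x), inl (inl y) => adj x y
  | inl (inl x), inl (inr i) => (x == root G) && (nat_of_ord i == 0)%N
  | inl (inr i), inl (inr j) => (nat_of_ord j == (nat_of_ord i).+1)%N
  | _, _ => false
  end
  || [exists x : vtx H, exists y : vtx H,
        [&& adj x y, a == pj_H x & b == pj_H y]].

Definition path_join : simple_graph := mk_sgraph pj_base.
End PathJoin.

(* K_1 rooted at its unique vertex, and the tailed graph H^k = P^k(H, K_1). *)
Definition K1 : rooted_graph := complete_rgraph (ltn0Sn 0).
Definition tailed (H : rooted_graph) (k : nat) : simple_graph := path_join H K1 k.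

Definition proper_col (G : simple_graph) (n : nat) (c : {ffun vtx G -> 'I_n}) : bool :=
  [forall x, forall y, adj x y ==> (c x != c y)].

(* The chromatic symmetric function X_G specialised to n variables
   x_0, ..., x_{n-1} (all other variables set to 0), with integer
   coefficients. *)
Definition chromsym (n : nat) (G : simple_graph) : {mpoly int[n]} :=
  \sum_(c : {ffun vtx G -> 'I_n} | proper_col c) \prod_(v : vtx G) 'X_(c v).

(* Weight colour i by X i in a commutative ring, so that X_G becomes the
   weighted count [wcol] of proper colourings.  A proper colouring of
   P^k(G,H) is a proper colouring of G, a proper colouring of the path, and a
   colouring of H - v whose root gets the last colour of the path.  Summing
   out the path and H leaves a transfer W_k(c) depending only on the colour c
   of the root of G, and W_{k+1}(c) = T_k - X_c W_k(c) where
   T_k = X_{H^k} = sum_c X_c W_k(c), the last identity by reversing the path.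
   For G = K_g the colourings with root colour c weigh
   X_c (g-1)! e_{g-1}(X without c); since
   e_l(X without c) = e_l - X_c e_{l-1}(X without c), induction on g turns
   sum_c X_c e_{g-1}(X without c) W_k(c) into sum_l (1 - l) e_l T_{k+g-1-l}. *)

From Pilot Require Import Defs.
From mathcomp Require Import all_boot all_order all_algebra.
From mathcomp Require Import mpoly.
From mathcomp Require Import ring.
Import GRing.Theory.
Local Open Scope ring_scope.
(* Plain [root] would denote the polynomial predicate of MathComp. *)
Local Notation root := Defs.root.
Set Implicit Arguments. Unset Strict Implicit. Unset Printing Implicit Defensive.

Definition ffun_join (A B T : finType) (fa : {ffun A -> T}) (fb : {ffun B -> T}) :
  {ffun A + B -> T} :=
  [ffun x => match x with inl a => fa a | inr b => fb b end].

Lemma big_ffun_sumType (V : nmodType) (A B T : finType) (F : {ffun A + B -> T} -> V) :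
  \sum_(f : {ffun A + B -> T}) F f =
  \sum_(fa : {ffun A -> T}) \sum_(fb : {ffun B -> T}) F (ffun_join fa fb).
Proof.
rewrite pair_bigA /= (reindex (fun p => ffun_join p.1 p.2)) //=.
exists (fun f => ([ffun a => f (inl a)], [ffun b => f (inr b)])).
  by move=> [fa fb] _ /=; congr pair; apply/ffunP => x; rewrite !ffunE.
by move=> f _; apply/ffunP => -[a|b]; rewrite /= !ffunE.
Qed.

Definition ffun_cons (m : nat) (T : finType) (t : T) (f : {ffun 'I_m -> T}) :
  {ffun 'I_m.+1 -> T} :=
  [ffun i => if unlift ord0 i is Some j then f j else t].

Lemma ffun_cons0 m T t f : @ffun_cons m T t f ord0 = t.
Proof. by rewrite ffunE unlift_none. Qed.

Lemma ffun_cons_lift m T t f j : @ffun_cons m T t f (lift ord0 j) = f j.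
Proof. by rewrite ffunE liftK. Qed.

Lemma big_ffun_cons (V : nmodType) (m : nat) (T : finType) (F : {ffun 'I_m.+1 -> T} -> V) :
  \sum_(f : {ffun 'I_m.+1 -> T}) F f =
  \sum_(t : T) \sum_(f : {ffun 'I_m -> T}) F (ffun_cons t f).
Proof.
rewrite pair_bigA /= (reindex (fun p => ffun_cons p.1 p.2)) //=.
exists (fun f => (f ord0, [ffun j => f (lift ord0 j)])).
  move=> [t f] _ /=; rewrite ffun_cons0; congr pair.
  by apply/ffunP => x; rewrite ffunE ffun_cons_lift.
move=> f _; apply/ffunP => i; rewrite ffunE.
by case: unliftP => [j ->|->]; rewrite ?ffunE.
Qed.

Lemma prod_ffun_cons (R : pzSemiRingType) (m : nat) (T : finType) (F : T -> R) t
    (f : {ffun 'I_m -> T}) :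
  \prod_i F (ffun_cons t f i) = F t * \prod_i F (f i).
Proof.
rewrite big_ord_recl ffun_cons0; congr (_ * _).
by apply: eq_bigr => i _; rewrite ffun_cons_lift.
Qed.

Section Weighted.
Variables (R : comNzRingType) (n : nat) (X : 'I_n -> R).

(* A chain p 0, ..., p (m-1) hanging off a vertex coloured c: the path
   vertices of P^m(G,H) after the root of G. *)
Definition proper_chain m (c : 'I_n) (p : {ffun 'I_m -> 'I_n}) : bool :=
  [forall i : 'I_m, ((i == 0 :> nat) ==> (p i != c)) &&
     [forall j : 'I_m, (j == i.+1 :> nat) ==> (p i != p j)]].

Definition chain_end m (c : 'I_n) (p : {ffun 'I_m -> 'I_n}) : 'I_n :=
  if [pick i : 'I_m | i.+1 == m] is Some i then p i else c.

Definition chain_sum m (f : 'I_n -> R) (c : 'I_n) : R :=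
  \sum_(p : {ffun 'I_m -> 'I_n} | proper_chain c p)
    (\prod_i X (p i)) * f (chain_end c p).

Lemma proper_chain_cons m c t (p : {ffun 'I_m -> 'I_n}) :
  proper_chain c (ffun_cons t p) = (t != c) && proper_chain t p.
Proof.
apply/forallP/andP => [P | [tc /forallP P] i].
  split; first by have /andP[] := P ord0; rewrite ffun_cons0.
  apply/forallP => i; have /andP[_ /forallP Pi] := P (lift ord0 i).
  apply/andP; split.
    apply/implyP => /eqP i0; have /andP[_ /forallP/(_ (lift ord0 i))] := P ord0.
    by rewrite lift0 i0 /= ffun_cons0 ffun_cons_lift eq_sym.
  apply/forallP => j; have := Pi (lift ord0 j).
  by rewrite !lift0 eqSS !ffun_cons_lift.
apply/andP; split.
  by case: (unliftP ord0 i) => [i' ->|->]; rewrite ?lift0 // ffun_cons0 tc implybT.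
apply/forallP => j; case: (unliftP ord0 j) => [j' ->|->]; last by apply/implyP.
case: (unliftP ord0 i) => [i' ->|->]; rewrite !lift0 ?eqSS !ffun_cons_lift ?ffun_cons0.
  by have /andP[_ /forallP] := P i'.
by apply/implyP => j0; have /andP[+ _] := P j'; rewrite j0 eq_sym.
Qed.

Lemma chain_end0 c (p : {ffun 'I_0 -> 'I_n}) : chain_end c p = c.
Proof. by rewrite /chain_end; case: pickP => // -[]. Qed.

Lemma chain_end_max m c (p : {ffun 'I_m.+1 -> 'I_n}) : chain_end c p = p ord_max.
Proof.
rewrite /chain_end; case: pickP => [i /eqP [i_max] | /(_ ord_max)]; last first.
  by rewrite eqxx.
by congr (p _); apply/val_inj.
Qed.

Lemma chain_end_cons m c t (p : {ffun 'I_m -> 'I_n}) :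
  chain_end c (ffun_cons t p) = chain_end t p.
Proof.
rewrite chain_end_max; case: m p => [|m] p.
  by rewrite chain_end0 (_ : ord_max = ord0) ?ffun_cons0 //; apply/val_inj.
rewrite chain_end_max (_ : ord_max = lift ord0 ord_max) ?ffun_cons_lift //.
exact: val_inj.
Qed.

Lemma chain_sum0 f c : chain_sum 0 f c = f c.
Proof.
rewrite /chain_sum (big_pred1 [ffun=> c]) => [|p].
  by rewrite big_ord0 mul1r chain_end0.
have -> : p = [ffun=> c] by apply/ffunP => -[].
by rewrite /= eqxx; apply/forallP => -[].
Qed.

Lemma chain_sumS m f c : chain_sum m.+1 f c = \sum_(d | d != c) X d * chain_sum m f d.
Proof.
rewrite /chain_sum big_mkcond big_ffun_cons [RHS]big_mkcond; apply: eq_bigr => t _ /=.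
under eq_bigr do rewrite proper_chain_cons.
case: (t != c) => /=; last by rewrite big1.
rewrite big_distrr [RHS]big_mkcond; apply: eq_bigr => p _ /=.
by case: (proper_chain t p); rewrite // prod_ffun_cons chain_end_cons mulrA.
Qed.

Definition wcol (G : simple_graph) : R :=
  \sum_(k : {ffun vtx G -> 'I_n} | proper_col k) \prod_x X (k x).

Definition wcol_root (G : rooted_graph) (c : 'I_n) : R :=
  \sum_(k : {ffun vtx G -> 'I_n} | proper_col k && (k (root G) == c)) \prod_x X (k x).

Local Notation punct H := {x : vtx H | x != root H}.

Definition with_root (H : rooted_graph) (r : {ffun punct H -> 'I_n}) (d : 'I_n) :
  {ffun vtx H -> 'I_n} :=
  [ffun x => if (insub x : option (punct H)) is Some y then r y else d].

Definition wcol_punct (H : rooted_graph) (d : 'I_n) : R :=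
  \sum_(r : {ffun punct H -> 'I_n} | proper_col (with_root r d)) \prod_y X (r y).

Lemma with_root_root (H : rooted_graph) r d : with_root r d (root H) = d.
Proof. by rewrite ffunE insubN ?negbK. Qed.

Lemma with_root_val (H : rooted_graph) r d (y : punct H) : with_root r d (val y) = r y.
Proof. by rewrite ffunE valK. Qed.

Lemma wcol_by_root (G : rooted_graph) (phi : 'I_n -> R) :
  \sum_(k : {ffun vtx G -> 'I_n} | proper_col k) (\prod_x X (k x)) * phi (k (root G)) =
  \sum_c wcol_root G c * phi c.
Proof.
rewrite (partition_big (fun k : {ffun vtx G -> 'I_n} => k (root G)) predT) //=.
by apply: eq_bigr => c _; rewrite big_distrl; apply: eq_bigr => k /andP[_ /eqP ->].
Qed.

Lemma wcol_rootE (H : rooted_graph) c : wcol_root H c = X c * wcol_punct H c.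
Proof.
pose restr (k : {ffun vtx H -> 'I_n}) : {ffun punct H -> 'I_n} := [ffun y => k (val y)].
rewrite /wcol_root (reindex_onto (fun r => with_root r c) restr); last first.
  move=> k /andP[_ /eqP kc]; apply/ffunP => x; rewrite !ffunE.
  by case: insubP => [y _ <-| /negPn/eqP ->]; rewrite ?ffunE.
rewrite /wcol_punct big_distrr; apply: eq_big => r.
  have -> : restr (with_root r c) == r by apply/eqP/ffunP => y; rewrite ffunE with_root_val.
  by rewrite with_root_root eqxx !andbT.
move=> _; rewrite (bigD1 (root H)) //= with_root_root; congr (_ * _).
rewrite (eq_bigl [pred x | x != root H]) // big_sub.
by apply: eq_bigr => y _; rewrite with_root_val.
Qed.

Lemma wcol_punct_K1 d : wcol_punct K1 d = 1.
Proof.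
have no_punct (y : punct K1) : False.
  by case: y => x; rewrite (ord1 x) (_ : root K1 = ord0) ?eqxx //; apply/val_inj.
have prod1 (r : {ffun punct K1 -> 'I_n}) : \prod_y X (r y) = 1.
  by rewrite big1 // => y; case: (no_punct y).
rewrite /wcol_punct (eq_bigl predT) => [|r]; last first.
  by apply/forallP => x; apply/forallP => y; rewrite (ord1 x) (ord1 y).
under eq_bigr do rewrite prod1.
by rewrite sumr_const card_ffun (@eq_card0 _ {: punct K1}) // => y; case: (no_punct y).
Qed.

Lemma proper_colP (G : simple_graph) (k : {ffun vtx G -> 'I_n}) :
  reflect (forall x y, adj x y -> k x != k y) (proper_col k).
Proof.
apply: (iffP forallP) => [P x y | P x]; first exact/implyP/(forallP (P x)).
by apply/forallP => y; apply/implyP; apply: P.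
Qed.

Lemma proper_mk_sgraphP (T : finType) (e : rel T) (k : {ffun T -> 'I_n}) :
  reflect (forall a b, e a b -> a != b -> k a != k b) (@proper_col (mk_sgraph e) n k).
Proof.
apply: (iffP (proper_colP _)) => [P a b eab nab | P a b /andP[nab /orP[eab|eba]]].
- by apply: P; rewrite /= /simplify nab eab.
- exact: P.
- by rewrite eq_sym; apply: P eba _; rewrite eq_sym.
Qed.

Section PathJoin.
Variables (G H : rooted_graph) (m : nat).

Local Notation pj_col k p r :=
  (ffun_join (ffun_join k p) r : {ffun vtx (path_join G H m) -> 'I_n}).

Lemma pj_col_H k p r x :
  pj_col k p r (pj_H G m x) = with_root r (chain_end (k (root G)) p) x.
Proof.
rewrite /pj_H [RHS]ffunE; case: insubP => [y _ _ | _]; first by rewrite ffunE.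
by rewrite /pj_v /chain_end; case: pickP => [i _|_]; rewrite !ffunE.
Qed.

Lemma pj_H_inj : injective (@pj_H G H m).
Proof.
move=> x y; rewrite /pj_H /pj_v.
case: insubP => [x' _ <-|/negPn/eqP ->]; case: insubP => [y' _ <-|/negPn/eqP ->] //.
- by case=> ->.
- by case: pickP.
- by case: pickP.
Qed.

Lemma proper_pj_col k p r :
  proper_col (pj_col k p r) =
  [&& proper_col k, proper_chain (k (root G)) p &
      proper_col (with_root r (chain_end (k (root G)) p))].
Proof.
apply/idP/and3P => [/proper_mk_sgraphP P | [/proper_colP Pk /forallP Pp /proper_colP Pr]].
  split.
  - apply/proper_colP => x y xy; have := P (inl (inl x)) (inl (inl y)).
    rewrite /pj_base /= xy !ffunE; apply=> //.
    by apply: contraTneq xy => -[->]; rewrite adj_irr.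
  - apply/forallP => i; apply/andP; split.
      apply/implyP => i0; have := P (inl (inl (root G))) (inl (inr i)).
      by rewrite /pj_base /= eqxx i0 !ffunE eq_sym; apply.
    apply/forallP => j; apply/implyP => ji; have := P (inl (inr i)) (inl (inr j)).
    rewrite /pj_base /= ji !ffunE; apply=> //.
    by apply: contraTneq ji => -[->]; rewrite eqn_leq ltnn andbF.
  - apply/proper_colP => x y xy; rewrite -!pj_col_H; apply: P.
      apply/orP; right; apply/existsP; exists x; apply/existsP; exists y.
      by rewrite xy !eqxx.
    by apply: contraTneq xy => /pj_H_inj ->; rewrite adj_irr.
apply/proper_mk_sgraphP => a b.
case/orP => [| /existsP[x /existsP[y /and3P[xy /eqP-> /eqP->]]]] ab.
  2: by rewrite !pj_col_H Pr.
case: a b ab => [[x|i]|?] [[y|j]|?] //= ab _; rewrite !ffunE.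
- exact: Pk.
- by case/andP: ab => /eqP-> j0; have /andP[/implyP/(_ j0)] := Pp j; rewrite eq_sym.
- by have /andP[_ /forallP/(_ j)/implyP/(_ ab)] := Pp i.
Qed.

Lemma prod_pj_col k p r :
  \prod_v X (pj_col k p r v) = \prod_x X (k x) * \prod_i X (p i) * \prod_y X (r y).
Proof.
by rewrite !big_sumType; congr (_ * _ * _); apply: eq_bigr => i _; rewrite !ffunE.
Qed.

Lemma wcol_path_join :
  wcol (path_join G H m) = \sum_c wcol_root G c * chain_sum m (wcol_punct H) c.
Proof.
rewrite -wcol_by_root /wcol big_mkcond !big_ffun_sumType /= [RHS]big_mkcond.
apply: eq_bigr => k _.
under eq_bigr => p _ do under eq_bigr => r _ do rewrite proper_pj_col prod_pj_col.
case: (proper_col k) => /=; last by rewrite big1 // => p _; rewrite big1.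
rewrite /chain_sum big_distrr [RHS]big_mkcond /=; apply: eq_bigr => p _.
case: (proper_chain _ p) => /=; last by rewrite big1.
rewrite /wcol_punct !big_distrr [RHS]big_mkcond /=; apply: eq_bigr => r _.
by case: (proper_col _); rewrite ?mulrA.
Qed.
End PathJoin.

Definition nchain m (c d : 'I_n) : R := chain_sum m (fun e => (e == d)%:R) c.

Lemma chain_sumE m f c : chain_sum m f c = \sum_d nchain m c d * f d.
Proof.
rewrite /nchain /chain_sum; under [RHS]eq_bigr do rewrite big_distrl.
rewrite exchange_big; apply: eq_bigr => p _ /=.
under [RHS]eq_bigr do rewrite -mulrA; rewrite -big_distrr; congr (_ * _).
rewrite (bigD1 (chain_end c p)) //= eqxx mul1r big1 ?addr0 // => d.
by rewrite eq_sym => /negbTE->; rewrite mul0r.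
Qed.

Lemma nchain0 c d : nchain 0 c d = (c == d)%:R.
Proof. exact: chain_sum0. Qed.

Lemma nchainS m c d : nchain m.+1 c d = \sum_(e | e != c) X e * nchain m e d.
Proof. exact: chain_sumS. Qed.

Lemma sum_delta_neq (c d : 'I_n) (F : 'I_n -> R) :
  \sum_(e | e != c) (e == d)%:R * F e = (d != c)%:R * F d.
Proof.
have [->|dc] := eqVneq d c; first by rewrite mul0r big1 // => e /negbTE->; rewrite mul0r.
rewrite (bigD1 d) //= eqxx mul1r big1 ?addr0 ?mul1r // => e /andP[_ /negbTE->].
by rewrite mul0r.
Qed.

Lemma nchainSr m c d : nchain m.+1 c d = \sum_(e | e != d) nchain m c e * X d.
Proof.
elim: m c => [|m IHm] c.
  rewrite nchainS; under eq_bigr do rewrite nchain0 mulrC.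
  under [RHS]eq_bigr do rewrite nchain0 eq_sym.
  by rewrite !sum_delta_neq eq_sym.
rewrite nchainS; under eq_bigr do rewrite IHm big_distrr.
rewrite exchange_big; apply: eq_bigr => e _ /=.
by rewrite nchainS big_distrl; apply: eq_bigr => f _; rewrite mulrA.
Qed.

(* Both sides weigh the walks from c to d, end points included, read in
   opposite directions. *)
Lemma nchain_sym m c d : X c * nchain m c d = X d * nchain m d c.
Proof.
elim: m c d => [|m IHm] c d.
  by rewrite !nchain0; have [->|cd] := eqVneq c d; rewrite // !mulr0.
rewrite nchainS nchainSr !big_distrr; apply: eq_bigr => e _ /=.
by rewrite IHm mulrCA [nchain _ _ _ * _]mulrC.
Qed.

Lemma wcol_tailed (H : rooted_graph) m :
  wcol (tailed H m) = \sum_d X d * chain_sum m (wcol_punct H) d.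
Proof.
rewrite wcol_path_join; under eq_bigr do rewrite wcol_rootE chain_sumE.
under eq_bigr do under eq_bigr do rewrite wcol_punct_K1 mulr1.
under eq_bigr do rewrite big_distrr /=.
rewrite exchange_big; apply: eq_bigr => d _; rewrite chain_sumE big_distrr.
by apply: eq_bigr => c _ /=; rewrite mulrAC nchain_sym mulrA.
Qed.

Definition elem_sym (A : {set 'I_n}) (j : nat) : R :=
  \sum_(S : {set 'I_n} | (S \subset A) && (#|S| == j)) \prod_(i in S) X i.

Lemma elem_sym0 (A : {set 'I_n}) : elem_sym A 0 = 1.
Proof.
rewrite /elem_sym (big_pred1 set0) ?big_set0 // => S.
by rewrite cards_eq0 /=; case: eqP => [->|]; rewrite ?sub0set ?andbF.
Qed.

Lemma mul_elem_symD1 (A : {set 'I_n}) d j : d \in A ->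
  X d * elem_sym (A :\ d) j =
  \sum_(S : {set 'I_n} | [&& S \subset A, #|S| == j.+1 & d \in S]) \prod_(i in S) X i.
Proof.
move=> dA; rewrite /elem_sym big_distrr.
rewrite [RHS](reindex_onto (fun S => d |: S) (fun T => T :\ d)); last first.
  by move=> T /and3P[_ _ dT]; rewrite setD1K.
apply: eq_big => S; last first.
  by rewrite subsetD1 => /andP[/andP[_ dS] _]; rewrite big_setU1.
rewrite subsetD1 subUset sub1set dA setU11 cardsU1 andbT.
have [dS|dS] := boolP (d \in S); last first.
  by rewrite setU1K // eqxx add1n eqSS /= !andbT.
have -> : ((d |: S) :\ d == S) = false.
  by apply/negbTE; apply: contraTneq dS => <-; rewrite setD11.
by rewrite !andbF.
Qed.

Lemma elem_symS_D1 (A : {set 'I_n}) c j : c \in A ->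
  elem_sym A j.+1 = elem_sym (A :\ c) j.+1 + X c * elem_sym (A :\ c) j.
Proof.
move=> cA; rewrite mul_elem_symD1 // /elem_sym.
rewrite [LHS](bigID (fun S : {set 'I_n} => c \in S)) /= addrC.
by congr (_ + _); apply: eq_bigl => S; rewrite ?subsetD1 -andbA // andbCA andbC.
Qed.

Lemma sum_mul_elem_symD1 (A : {set 'I_n}) j :
  \sum_(d in A) X d * elem_sym (A :\ d) j = j.+1%:R * elem_sym A j.+1.
Proof.
under eq_bigr => d dA do rewrite mul_elem_symD1 //.
rewrite (exchange_big_dep (fun S : {set 'I_n} => (S \subset A) && (#|S| == j.+1))) /=.
  2: by move=> d S _ /and3P[-> ->].
rewrite /elem_sym big_distrr /=; apply: eq_bigr => S /andP[sSA /eqP cS].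
transitivity (\sum_(d in S) \prod_(i in S) X i).
  2: by rewrite /= sumr_const cS mulr_natl.
by apply: eq_bigl => d; rewrite sSA cS eqxx /= andb_idl // => /(subsetP sSA).
Qed.

Definition inj_sum (A : {set 'I_n}) m : R :=
  \sum_(f : {ffun 'I_m -> 'I_n} | injectiveb f && [forall i, f i \in A]) \prod_i X (f i).

Lemma injectiveb_cons m t (f : {ffun 'I_m -> 'I_n}) :
  injectiveb (ffun_cons t f) = [forall i, f i \in [set~ t]] && injectiveb f.
Proof.
apply/injectiveP/andP => [inj | [/forallP ft /injectiveP inj] i j].
  split; last first.
    apply/injectiveP => i j fij; apply: (@lift_inj _ ord0); apply: inj.
    by rewrite !ffun_cons_lift.
  apply/forallP => i; rewrite in_setC1; apply: contra_neq (neq_lift ord0 i) => fit.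
  by apply: inj; rewrite ffun_cons0 ffun_cons_lift.
have ft' k : f k = t -> False by move=> fkt; have := ft k; rewrite fkt in_setC1 eqxx.
case: (unliftP ord0 i) (unliftP ord0 j) => [i' ->|->] [j' ->|->];
  rewrite ?ffun_cons_lift ?ffun_cons0 //; [by move/inj-> | by move/ft' | by move/esym/ft'].
Qed.

Lemma forall_in_cons m (A : {set 'I_n}) t (f : {ffun 'I_m -> 'I_n}) :
  [forall i, ffun_cons t f i \in A] = (t \in A) && [forall i, f i \in A].
Proof.
apply/forallP/andP => [P | [tA /forallP P] i].
  by split; [rewrite -(ffun_cons0 t f) | apply/forallP => i; rewrite -(ffun_cons_lift t)].
by case: (unliftP ord0 i) => [i' ->|->]; rewrite ?ffun_cons_lift ?ffun_cons0.
Qed.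

Lemma forall_in_setD1 m (A : {set 'I_n}) t (f : {ffun 'I_m -> 'I_n}) :
  [forall i, f i \in A :\ t] = [forall i, f i \in [set~ t]] && [forall i, f i \in A].
Proof.
apply/forallP/andP => [P | [/forallP Pt /forallP PA] i].
  2: by rewrite in_setD1 -in_setC1 Pt PA.
by split; apply/forallP => i; have := P i; rewrite in_setD1 ?in_setC1 => /andP[].
Qed.

Lemma inj_sumE (A : {set 'I_n}) m : inj_sum A m = m`!%:R * elem_sym A m.
Proof.
elim: m A => [|m IHm] A.
  rewrite /inj_sum elem_sym0 mulr1 (eq_bigl predT) => [|f]; last first.
    by apply/andP; split; [apply/injectiveP => -[] | apply/forallP => -[]].
  under eq_bigr do rewrite big_ord0.
  by rewrite sumr_const card_ffun !card_ord.
rewrite /inj_sum big_mkcond big_ffun_cons /=.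
under eq_bigr => t _ do under eq_bigr => f _ do
  rewrite injectiveb_cons forall_in_cons prod_ffun_cons.
rewrite (bigID (mem A)) /= [X in _ + X]big1 ?addr0 => [|t /negbTE tA]; last first.
  by rewrite big1 // => f _; rewrite tA andbF.
rewrite factS natrM [_.+1%:R * _]mulrC -mulrA -sum_mul_elem_symD1 big_distrr.
apply: eq_bigr => t tA /=; rewrite mulrCA -IHm /inj_sum big_distrr /= [RHS]big_mkcond /=.
by apply: eq_bigr => f _; rewrite forall_in_setD1 tA /= [_ && injectiveb f]andbC andbA.
Qed.

Lemma proper_col_completeP g (hg : (0 < g)%N) (k : {ffun 'I_g -> 'I_n}) :
  reflect (injective k) (@proper_col (complete_rgraph hg) n k).
Proof.
apply: (iffP (proper_colP _)) => [P x y kxy | inj x y /andP[nxy _]].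
  apply/eqP; apply: contraLR (introT eqP kxy) => nxy.
  by apply: P; rewrite /= /simplify nxy.
by apply: contraNneq nxy => /inj ->.
Qed.

Lemma wcol_root_complete g (hg : (0 < g.+1)%N) c :
  wcol_root (complete_rgraph hg) c = X c * (g`!%:R * elem_sym [set~ c] g).
Proof.
rewrite -inj_sumE /wcol_root (_ : root (complete_rgraph hg) = ord0); last exact: val_inj.
rewrite big_mkcond big_ffun_cons /=.
rewrite (bigD1 c) //= [X in _ + X]big1 ?addr0 => [|t tc]; last first.
  by rewrite big1 // => f _; rewrite ffun_cons0 (negbTE tc) andbF.
rewrite /inj_sum big_distrr /= [RHS]big_mkcond /=; apply: eq_bigr => f _.
rewrite (sameP (proper_col_completeP hg _) (injectiveP (ffun_cons c f))).
by rewrite injectiveb_cons ffun_cons0 eqxx andbT andbC prod_ffun_cons.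
Qed.

Lemma sum_mul_elem_symC1 j :
  \sum_c X c * elem_sym [set~ c] j = j.+1%:R * elem_sym setT j.+1.
Proof. by rewrite -sum_mul_elem_symD1; apply: eq_big => [c|c _]; rewrite ?inE ?setTD. Qed.

Lemma elem_symC1S c j :
  elem_sym [set~ c] j.+1 = elem_sym setT j.+1 - X c * elem_sym [set~ c] j.
Proof. by rewrite (elem_symS_D1 j (in_setT c)) setTD addrK. Qed.

Section Tailed.
Variable H : rooted_graph.

Local Notation T m := (wcol (tailed H m)).
Local Notation W m := (chain_sum m (wcol_punct H)).

Lemma chain_sum_tailedS m c : W m.+1 c = T m - X c * W m c.
Proof. by rewrite wcol_tailed chain_sumS [X in _ = X - _](bigD1 c) //= addrC addrK. Qed.

Lemma elem_sym_chain_sumS g k :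
  \sum_c X c * elem_sym [set~ c] g.+1 * W k c =
  \sum_c X c * elem_sym [set~ c] g * W k.+1 c - g%:R * elem_sym setT g.+1 * T k.
Proof.
have -> : \sum_c X c * elem_sym [set~ c] g.+1 * W k c =
          elem_sym setT g.+1 * T k - \sum_c X c * elem_sym [set~ c] g * (X c * W k c).
  rewrite wcol_tailed big_distrr -sumrB; apply: eq_bigr => c _ /=.
  by rewrite elem_symC1S; ring.
have -> : \sum_c X c * elem_sym [set~ c] g * W k.+1 c =
          T k * (g.+1%:R * elem_sym setT g.+1) -
          \sum_c X c * elem_sym [set~ c] g * (X c * W k c).
  rewrite -sum_mul_elem_symC1 big_distrr -sumrB; apply: eq_bigr => c _ /=.
  by rewrite chain_sum_tailedS; ring.
by rewrite -natr1; ring.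
Qed.

Lemma elem_sym_chain_sum g k :
  \sum_c X c * elem_sym [set~ c] g * W k c =
  \sum_(l < g.+1) (1 - l%:R) * elem_sym setT l * T (k + g - l).
Proof.
elim: g k => [|g IHg] k.
  rewrite big_ord1 subr0 mul1r elem_sym0 mul1r addn0 subn0 wcol_tailed.
  by under eq_bigr do rewrite elem_sym0 mulr1.
rewrite elem_sym_chain_sumS IHg [RHS]big_ord_recr /= addnK.
under [in RHS]eq_bigr do rewrite -addSnnS.
by rewrite -natr1; ring.
Qed.

Lemma wcol_complete_join g (hg : (0 < g.+1)%N) k :
  wcol (path_join (complete_rgraph hg) H k) =
  g`!%:R * \sum_(l < g.+1) (1 - l%:R) * elem_sym setT l * T (k + g - l).
Proof.
rewrite wcol_path_join -elem_sym_chain_sum mulr_sumr; apply: eq_bigr => c _.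
by rewrite wcol_root_complete; ring.
Qed.
End Tailed.
End Weighted.

Theorem proposition3p1 (H : rooted_graph) (k g : nat) (hg : (0 < g)%N) (n : nat) :
  chromsym n (path_join (complete_rgraph hg) H k) =
  (g.-1)`!%:R *
    \sum_(l < g) ((1 - (l : nat)%:R) * mesym n int l
                   * chromsym n (tailed H (k + g - 1 - l)%N)).
Proof.
case: g hg => [//|g] hg.
have chromsymE G : chromsym n G = wcol (fun i => 'X_i) G by [].
rewrite !chromsymE wcol_complete_join /=; congr (_ * _); apply: eq_bigr => l _.
have -> : mesym n int l = elem_sym (fun i => 'X_i) setT l.
  by apply: eq_bigl => S; rewrite subsetT.
by rewrite chromsymE addnS subSS subn0.
Qed.
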